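(* Let $\Gamma$ be a group with a strictly decreasing sequence $\{\Gamma_n\}$ of finite-index normal subgroups with trivial intersection, $Z=\varprojlim\Gamma/\Gamma_n$ with the left translation action, $\pi_n:Z\to\Gamma/\Gamma_n$ the quotient maps, and for $n\ge2$ let $\gamma_n\in\Gamma_{n-1}\setminus\Gamma_n$ with $\gamma_n^2\notin\Gamma_n$, and $C_n=\pi_n^{-1}(\gamma_n\Gamma_n)$. Let $s_1,s_2\in\Gamma$ and $z,z'\in Z$ with $s_1z\in C_{n_1}$, $s_2z\in C_{n_2}$ where $n_1<n_2$, and $s_1z'\in C_{m_1}$, $s_2z'\in C_{m_2}$. Then $s_1s_2^{-1}\in\gamma_{n_1}\Gamma_{n_1}$, and either (1) $m_1=n_1<m_2$, or (2) $m_1=m_2<n_1$.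
   Context: $Z=\varprojlim\Gamma/\Gamma_n$ is the compact group of compatible sequences in $\prod_n\Gamma/\Gamma_n$, containing $\Gamma$ as a subgroup. All indices are $\ge2$. (In the paper $\Gamma$ is a finitely generated nonabelian free group.) *)

From Stdlib Require Import List Arith.
Import ListNotations.

Section GroupDefs.
Context {G : Type} (mul : G -> G -> G) (inv : G -> G) (e : G).

Record is_group : Prop := {
  mulA : forall x y z, mul x (mul y z) = mul (mul x y) z;
  mul1g : forall x, mul e x = x;
  mulg1 : forall x, mul x e = x;
  mulVg : forall x, mul (inv x) x = e;
  mulgV : forall x, mul x (inv x) = e }.

Record is_normal_subgroup (H : G -> Prop) : Prop := {
  sg1 : H e;
  sgM : forall x y, H x -> H y -> H (mul x y);
  sgV : forall x, H x -> H (inv x);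
  sgJ : forall g h, H h -> H (mul (mul g h) (inv g)) }.

Definition finite_index (H : G -> Prop) : Prop :=
  exists l : list G, forall g, exists r, In r l /\ H (mul (inv r) g).

Definition in_coset (H : G -> Prop) (a x : G) : Prop := H (mul (inv a) x).

(* Points of Z = lim Gamma/Gamma_n (indices n >= 1), represented by a
   sequence of representatives z n of the coset pi_n(z) = (z n) Gamma_n,
   subject to compatibility of the projections Gamma/Gamma_m -> Gamma/Gamma_n. *)
Definition is_Zpoint (Gam : nat -> G -> Prop) (z : nat -> G) : Prop :=
  forall n m, 1 <= n -> n <= m -> Gam n (mul (inv (z n)) (z m)).

Definition translate (s : G) (z : nat -> G) : nat -> G := fun n => mul s (z n).

Definition in_C (Gam : nat -> G -> Prop) (gamma : nat -> G) (n : nat) (z : nat -> G) : Prop :=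
  in_coset (Gam n) (gamma n) (z n).

End GroupDefs.

From Stdlib Require Import List Arith Lia.

(* Since s1 z lies in C_{n1} and s2 z in C_{n2} with n1 < n2, the point s2 z is
   trivial in Gamma/Gamma_{n1}, so s1 s2^-1 lies in gamma_{n1} Gamma_{n1}.  Every
   element of gamma_n Gamma_n lies in Gamma_{n-1} but not in Gamma_n, so n1 is the
   exact level of s1 s2^-1.  The same computation at z' leaves three cases.  If
   m1 < m2, the level is also m1, so m1 = n1.  If m1 = m2, then s1 s2^-1 lies in
   Gamma_{m1} by normality but not in Gamma_{n1}, so m1 < n1.  If m1 > m2, then
   s2 s1^-1 lies in gamma_{m2} Gamma_{m2}, so its level m2 equals n1; now s1 s2^-1
   and its inverse both lie in gamma_{n1} Gamma_{n1}, which forces gamma_{n1}^2 into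
   Gamma_{n1}, contrary to the choice of gamma_{n1}. *)

Section Group.

Context {G : Type} {mul : G -> G -> G} {inv : G -> G} {e : G}.
Hypothesis Hg : is_group mul inv e.

Local Notation "x * y" := (mul x y).
Local Notation "x ^-1" := (inv x) (at level 3, left associativity, format "x ^-1").

Lemma mulKg x y : x^-1 * (x * y) = y.
Proof. rewrite (mulA _ _ _ Hg), (mulVg _ _ _ Hg), (mul1g _ _ _ Hg). reflexivity. Qed.

Lemma mulKVg x y : x * (x^-1 * y) = y.
Proof. rewrite (mulA _ _ _ Hg), (mulgV _ _ _ Hg), (mul1g _ _ _ Hg). reflexivity. Qed.

Lemma invg_unique x y : x * y = e -> x^-1 = y.
Proof. intro Hxy. rewrite <- (mulKg x y), Hxy, (mulg1 _ _ _ Hg). reflexivity. Qed.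

Lemma invgK x : x^-1^-1 = x.
Proof. apply invg_unique, (mulVg _ _ _ Hg). Qed.

Lemma invMg x y : (x * y)^-1 = y^-1 * x^-1.
Proof.
  apply invg_unique.
  rewrite <- (mulA _ _ _ Hg), mulKVg, (mulgV _ _ _ Hg). reflexivity.
Qed.

Ltac group_simpl := repeat first
  [ rewrite invMg | rewrite invgK | rewrite <- (mulA _ _ _ Hg)
  | rewrite (mul1g _ _ _ Hg) | rewrite (mulg1 _ _ _ Hg) | rewrite (mulgV _ _ _ Hg)
  | rewrite (mulVg _ _ _ Hg) | rewrite mulKVg | rewrite mulKg ].

Section Coset.

Context {H : G -> Prop}.
Hypothesis HH : is_normal_subgroup mul inv e H.

Local Notation in_coset := (in_coset mul inv H).

Lemma in_coset_mulVr g x y : in_coset g x -> H y -> in_coset g (x * y^-1).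
Proof.
  unfold in_coset. intros Hx Hy.
  replace (g^-1 * (x * y^-1)) with (g^-1 * x * y^-1) by (group_simpl; reflexivity).
  apply (sgM _ _ _ _ HH); [exact Hx | exact (sgV _ _ _ _ HH _ Hy)].
Qed.

Lemma in_coset_notin g x : ~ H g -> in_coset g x -> ~ H x.
Proof.
  unfold in_coset. intros Hng Hx Hin. apply Hng.
  replace g with (x * (g^-1 * x)^-1) by (group_simpl; reflexivity).
  apply (sgM _ _ _ _ HH); [exact Hin | exact (sgV _ _ _ _ HH _ Hx)].
Qed.

Lemma in_coset_closed (K : G -> Prop) g x :
  (forall y, H y -> K y) -> (forall y y', K y -> K y' -> K (y * y')) ->
  K g -> in_coset g x -> K x.
Proof.
  unfold in_coset. intros HK KM Kg Hx.
  rewrite <- (mulKVg g x). exact (KM _ _ Kg (HK _ Hx)).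
Qed.

(* Normality: g a (g b)^-1 = g (a b^-1) g^-1. *)
Lemma in_coset_divr g x y : in_coset g x -> in_coset g y -> H (x * y^-1).
Proof.
  unfold in_coset. intros Hx Hy.
  replace (x * y^-1) with (g * ((g^-1 * x) * (g^-1 * y)^-1) * g^-1)
    by (group_simpl; reflexivity).
  apply (sgJ _ _ _ _ HH), (sgM _ _ _ _ HH); [exact Hx | exact (sgV _ _ _ _ HH _ Hy)].
Qed.

(* From x = g a and x^-1 = g b one gets g g = b^-1 (g^-1 a^-1 g). *)
Lemma in_coset_inv_sqr g x : in_coset g x -> in_coset g x^-1 -> H (g * g).
Proof.
  unfold in_coset. intros Hx Hx'.
  replace (g * g) with ((g^-1 * x^-1)^-1 * (g^-1 * (g^-1 * x)^-1 * g^-1^-1))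
    by (group_simpl; reflexivity).
  apply (sgM _ _ _ _ HH); [exact (sgV _ _ _ _ HH _ Hx') |].
  apply (sgJ _ _ _ _ HH), (sgV _ _ _ _ HH _ Hx).
Qed.

End Coset.

Definition has_level (Gam : nat -> G -> Prop) (n : nat) (a : G) : Prop :=
  Gam (n - 1) a /\ ~ Gam n a.

Section Filtration.

Context {Gam : nat -> G -> Prop}.
Hypothesis Gam_normal : forall n, 1 <= n -> is_normal_subgroup mul inv e (Gam n).
Hypothesis Gam_decr : forall n, 1 <= n -> forall x, Gam (S n) x -> Gam n x.

Lemma Gam_mono j k x : 1 <= j <= k -> Gam k x -> Gam j x.
Proof.
  intros [Hj Hjk]. induction Hjk as [|k Hjk IH]; intro Hx; [exact Hx |].
  apply IH, Gam_decr; [lia | exact Hx].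
Qed.

Lemma has_level_unique m n a : 2 <= m -> 2 <= n ->
  has_level Gam m a -> has_level Gam n a -> m = n.
Proof.
  intros Hm Hn [Ha1 Ha2] [Hb1 Hb2].
  destruct (Nat.lt_trichotomy m n) as [Hmn | [Hmn | Hmn]]; [exfalso | exact Hmn | exfalso].
  - apply Ha2, (Gam_mono m (n - 1)); [lia | exact Hb1].
  - apply Hb2, (Gam_mono n (m - 1)); [lia | exact Ha1].
Qed.

Lemma has_levelV n a : 2 <= n -> has_level Gam n a -> has_level Gam n a^-1.
Proof.
  intros Hn [Ha1 Ha2]. split.
  - apply (sgV _ _ _ _ (Gam_normal (n - 1) ltac:(lia))), Ha1.
  - intro Ha. apply Ha2. rewrite <- (invgK a).
    apply (sgV _ _ _ _ (Gam_normal n ltac:(lia))), Ha.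
Qed.

Context {gamma : nat -> G}.
Hypothesis gamma_level : forall n, 2 <= n -> has_level Gam n (gamma n).

Local Notation C n w := (in_C mul inv Gam gamma n w).

Lemma in_coset_gamma_has_level n a :
  2 <= n -> in_coset mul inv (Gam n) (gamma n) a -> has_level Gam n a.
Proof.
  intros Hn Ha. destruct (gamma_level n Hn) as [Hg1 Hg2]. split.
  - apply (in_coset_closed (H := Gam n) (Gam (n - 1)) (gamma n)).
    + intro y. apply Gam_mono. lia.
    + apply (sgM _ _ _ _ (Gam_normal (n - 1) ltac:(lia))).
    + exact Hg1.
    + exact Ha.
  - exact (in_coset_notin (Gam_normal n ltac:(lia)) _ _ Hg2 Ha).
Qed.

Lemma in_C_translate_below s w m k : is_Zpoint mul inv Gam w -> 2 <= m ->
  C m (translate mul s w) -> 1 <= k < m -> Gam k (s * w k).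
Proof.
  intros Hw Hm Hsw Hk.
  assert (Hm1 : Gam (m - 1) (s * w m))
    by exact (proj1 (in_coset_gamma_has_level m _ Hm Hsw)).
  replace (s * w k) with ((s * w m) * ((w k)^-1 * w m)^-1)
    by (group_simpl; reflexivity).
  apply (sgM _ _ _ _ (Gam_normal k ltac:(lia))).
  - apply (Gam_mono k (m - 1)); [lia | exact Hm1].
  - apply (sgV _ _ _ _ (Gam_normal k ltac:(lia))), Hw; lia.
Qed.

Lemma in_C_translate_divr s1 s2 w m m' : is_Zpoint mul inv Gam w -> 2 <= m -> m < m' ->
  C m (translate mul s1 w) -> C m' (translate mul s2 w) ->
  in_coset mul inv (Gam m) (gamma m) (s1 * s2^-1).
Proof.
  intros Hw Hm Hmm' H1 H2.
  replace (s1 * s2^-1) with ((s1 * w m) * (s2 * w m)^-1) by (group_simpl; reflexivity).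
  apply (in_coset_mulVr (Gam_normal m ltac:(lia))); [exact H1 |].
  apply (in_C_translate_below s2 w m'); [exact Hw | lia | exact H2 | lia].
Qed.

Lemma in_C_translate_same s1 s2 w m : 1 <= m ->
  C m (translate mul s1 w) -> C m (translate mul s2 w) -> Gam m (s1 * s2^-1).
Proof.
  intros Hm H1 H2.
  replace (s1 * s2^-1) with ((s1 * w m) * (s2 * w m)^-1) by (group_simpl; reflexivity).
  exact (in_coset_divr (Gam_normal m Hm) _ _ _ H1 H2).
Qed.

End Filtration.

End Group.

Theorem lemma5p9 (G : Type) (mul : G -> G -> G) (inv : G -> G) (e : G)
  (Hgrp : is_group mul inv e)
  (Gam : nat -> G -> Prop)
  (Hnormal : forall n, 1 <= n -> is_normal_subgroup mul inv e (Gam n))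
  (Hfin : forall n, 1 <= n -> finite_index mul inv (Gam n))
  (Hdecr : forall n, 1 <= n ->
     (forall x, Gam (S n) x -> Gam n x) /\ (exists x, Gam n x /\ ~ Gam (S n) x))
  (Htriv : forall x, (forall n, 1 <= n -> Gam n x) -> x = e)
  (gamma : nat -> G)
  (Hgamma : forall n, 2 <= n ->
     Gam (n - 1) (gamma n) /\ ~ Gam n (gamma n) /\ ~ Gam n (mul (gamma n) (gamma n)))
  (s1 s2 : G) (z z' : nat -> G)
  (Hz : is_Zpoint mul inv Gam z) (Hz' : is_Zpoint mul inv Gam z')
  (n1 n2 m1 m2 : nat)
  (Hn1 : 2 <= n1) (Hn2 : 2 <= n2) (Hm1 : 2 <= m1) (Hm2 : 2 <= m2)
  (Hn12 : n1 < n2)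
  (H1 : in_C mul inv Gam gamma n1 (translate mul s1 z))
  (H2 : in_C mul inv Gam gamma n2 (translate mul s2 z))
  (H1' : in_C mul inv Gam gamma m1 (translate mul s1 z'))
  (H2' : in_C mul inv Gam gamma m2 (translate mul s2 z')) :
  in_coset mul inv (Gam n1) (gamma n1) (mul s1 (inv s2)) /\
  ((m1 = n1 /\ n1 < m2) \/ (m1 = m2 /\ m2 < n1)).
Proof.
  (* Finite index, trivial intersection and strictness of the filtration are not needed. *)
  assert (Gam_decr : forall n, 1 <= n -> forall x, Gam (S n) x -> Gam n x)
    by (intros n Hn; exact (proj1 (Hdecr n Hn))).
  assert (gamma_level : forall n, 2 <= n -> has_level Gam n (gamma n))
    by (intros n Hn; destruct (Hgamma n Hn) as [? [? _]]; split; assumption).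
  pose proof (in_C_translate_divr Hgrp Hnormal Gam_decr gamma_level) as divr.
  pose proof (in_coset_gamma_has_level Hgrp Hnormal Gam_decr gamma_level) as coset_level.
  pose proof (divr _ _ _ _ _ Hz Hn1 Hn12 H1 H2) as Hs.
  split; [exact Hs |].
  pose proof (coset_level _ _ Hn1 Hs) as Ls.
  destruct (Nat.lt_trichotomy m1 m2) as [Hlt | [<- | Hgt]].
  - left. enough (m1 = n1) by lia.
    apply (has_level_unique Gam_decr m1 n1 (mul s1 (inv s2)) Hm1 Hn1); [| exact Ls].
    exact (coset_level _ _ Hm1 (divr _ _ _ _ _ Hz' Hm1 Hlt H1' H2')).
  - right. split; [reflexivity |].
    destruct (Nat.lt_ge_cases m1 n1) as [Hlt | Hge]; [exact Hlt | exfalso].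
    apply (proj2 Ls), (Gam_mono Gam_decr n1 m1); [lia |].
    exact (in_C_translate_same Hgrp Hnormal _ _ _ m1 ltac:(lia) H1' H2').
  - exfalso.
    pose proof (divr _ _ _ _ _ Hz' Hm2 Hgt H2' H1') as Hs'.
    assert (Hinv : inv (mul s1 (inv s2)) = mul s2 (inv s1))
      by (rewrite (invMg Hgrp), (invgK Hgrp); reflexivity).
    assert (m2 = n1) as ->.
    { apply (has_level_unique Gam_decr m2 n1 _ Hm2 Hn1 (coset_level _ _ Hm2 Hs')).
      rewrite <- Hinv. exact (has_levelV Hgrp Hnormal _ _ Hn1 Ls). }
    apply (proj2 (proj2 (Hgamma n1 Hn1))).
    apply (in_coset_inv_sqr Hgrp (Hnormal n1 ltac:(lia)) _ (mul s1 (inv s2)) Hs).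
    rewrite Hinv. exact Hs'.
Qed.
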